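(* Let $r\ge-1$ be an integer and $m\ge1$. Let $\beta_r(m,q)=\sum q^{|\pi|}$, summed over all partitions $\pi$ with $n$ copies of $n$ having exactly $m$ parts, whose lexicographically smallest part is of the form $i_i$ for some $i\ge1$, and such that, with parts listed in ascending lexicographic order, the weighted difference of each part and the preceding one is exactly $r$. Then $$\beta_r(m,q)=\frac{q^{m^2+r\binom m2}}{(q;q^2)_m}.$$
   Context: $M=\{m_i: 1\le i\le m\}$; a partition with $n$ copies of $n$ is a finite multiset of elements of $M$, and $|\pi|$ is the sum of the values (first entries) of its parts. Lexicographic order: $m_i>n_j$ iff $m>n$, or $m=n$ and $i>j$. Weighted difference $((m_i-n_j))=m-n-i-j$; ''successive weighted difference'' of consecutive parts $n_j\le m_i$ in ascending order means $((m_i-n_j))$. $(a;q)_m=\prod_{j=0}^{m-1}(1-aq^j)$. *)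

From HB Require Import structures.
From mathcomp Require Import all_boot all_order all_algebra.
Set Implicit Arguments. Unset Strict Implicit. Unset Printing Implicit Defensive.
Import Order.TTheory GRing.Theory Num.Theory.

(* A part m_i of a partition with n copies of n is the pair (m, i), 1 <= i <= m. *)
Definition part := (nat * nat)%type.
Definition valid_part (p : part) : bool := (1 <= p.2 <= p.1)%N.

Definition lexle (p p' : part) : bool :=
  (p.1 < p'.1)%N || ((p.1 == p'.1) && (p.2 <= p'.2)%N).

Definition wdiff (a b : part) : int :=
  (a.1%:Z - b.1%:Z - a.2%:Z - b.2%:Z)%R.

Definition weight (s : seq part) : nat := \sum_(p <- s) p.1.

(* A partition with n copies of n (a finite multiset of parts) is represented by
   the list of its parts in ascending lexicographic order (bijective encoding).
   beta_part r m s : s has exactly m parts, all valid, listed in ascending lex order,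
   the smallest part is of the form i_i (i >= 1), and each consecutive
   weighted difference equals r. *)
Definition beta_part (r : int) (m : nat) (s : seq part) : bool :=
  [&& size s == m,
      all valid_part s,
      sorted lexle s,
      (let p := head (0%N, 0%N) s in p.1 == p.2) &
      sorted (fun x y => wdiff y x == r) s].

(* Coefficient of q^N in beta_r(m,q): number of such partitions with |pi| = N.
   Every part of such a partition has value <= N (values are >= 1), hence
   both entries of every part are < N.+1, so enumerating m-tuples over
   'I_N.+1 * 'I_N.+1 lists each such partition exactly once. *)
Definition tuple_parts (N m : nat) (t : m.-tuple ('I_N.+1 * 'I_N.+1)) : seq part :=
  map (fun p => (nat_of_ord p.1, nat_of_ord p.2)) t.

Definition beta_coef (r : int) (m N : nat) : nat :=
  #|[set t : m.-tuple ('I_N.+1 * 'I_N.+1) |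
       beta_part r m (tuple_parts t) && (weight (tuple_parts t) == N)]|.

Definition qq2_poch (m : nat) : {poly int} :=
  (\prod_(j < m) (1 - 'X^(2 * j + 1)))%R.

From HB Require Import structures.
From mathcomp Require Import all_boot all_order all_algebra zify ring.
Import Order.TTheory GRing.Theory Num.Theory.
Set Implicit Arguments. Unset Strict Implicit.

(* Write r = s - 1 with s >= 0.  A partition counted by beta_r(m,q),
   with parts p_0 < ... < p_(m-1), p_j = (x_j, a_j + 1), is determined by the
   free sequence a_0, ..., a_(m-1) >= 0: the smallest part is x_0 = a_0 + 1 and
   the weighted-difference condition reads x_(j+1) = x_j + a_j + a_(j+1) + s + 1,
   so x_j = 2 (a_0 + ... + a_(j-1)) + a_j + 1 + j (s + 1) ("chains"); conversely
   every chain is such a partition (the lexicographic order is automatic).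
   Summing, |pi| = sum_j (2 (m-1-j) + 1) a_j + (m + (s+1) binom(m,2)), hence
     beta_r(m,q) = q^(m^2 + r binom(m,2)) / prod_j (1 - q^(2 (m-1-j) + 1)). *)

(* The coefficient of a_j in |pi| (an odd number, ranging over 1, 3, ..., 2m-1)
   and the weight of the chain with all a_j = 0. *)
Definition aweight (m j : nat) : nat := (2 * (m.-1 - j)).+1.
Arguments aweight : simpl never.
Definition base_weight (m s : nat) : nat := (m + s.+1 * 'C(m, 2))%N.

Lemma sq_base_weight (m s : nat) :
  ((m ^ 2)%:Z + (s%:Z - 1) * ('C(m, 2))%:Z = (base_weight m s)%:Z)%R.
Proof.
have sq_bin : (m ^ 2 = 2 * 'C(m, 2) + m)%N.
  by elim: m => [//|m IH]; rewrite binS bin1; nia.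
rewrite /base_weight; lia.
Qed.

Section Chains.
Variable s : nat.

Definition partial_sum (a : nat -> nat) (j : nat) : nat := \sum_(l < j) a l.

Definition chain_val (a : nat -> nat) (j : nat) : nat :=
  (2 * partial_sum a j + a j + 1 + j * s.+1)%N.

Definition chain (a : nat -> nat) (m : nat) : seq part :=
  mkseq (fun j => (chain_val a j, (a j).+1)) m.

Lemma chain_val_succ (a : nat -> nat) (j : nat) :
  chain_val a j.+1 = (chain_val a j + a j + a j.+1 + s.+1)%N.
Proof. rewrite /chain_val /partial_sum big_ord_recr /= mulSn; lia. Qed.

Lemma eq_chain_val (a b : nat -> nat) (m j : nat) :
  (forall l, (l < m)%N -> a l = b l) -> (j < m)%N -> chain_val a j = chain_val b j.
Proof.
move=> eq_ab ltjm; rewrite /chain_val /partial_sum (eq_ab j ltjm).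
congr (2 * _ + _ + _ + _)%N; apply: eq_bigr => l _; apply: eq_ab.
exact: ltn_trans (ltn_ord l) ltjm.
Qed.

Lemma chain_beta (a : nat -> nat) (m : nat) : beta_part (s%:Z - 1) m (chain a m).
Proof.
apply/and5P; split.
- by rewrite size_mkseq.
- by apply/allP => p /mapP [j _ ->]; rewrite /valid_part /= /chain_val; lia.
- apply/(sortedP (0, 0)%N) => i; rewrite size_mkseq => lti.
  rewrite !nth_mkseq //; last by lia.
  by rewrite /lexle /= chain_val_succ; apply/orP; left; lia.
- by case: m => [|m] //=; rewrite /chain_val /partial_sum big_ord0; apply/eqP; lia.
- apply/(sortedP (0, 0)%N) => i; rewrite size_mkseq => lti.
  rewrite !nth_mkseq //; last by lia.
  by rewrite /wdiff /= chain_val_succ; apply/eqP; lia.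
Qed.

Lemma beta_chain (p : seq part) : beta_part (s%:Z - 1) (size p) p ->
  p = chain (fun l => (nth (0, 0)%N p l).2 - 1) (size p).
Proof.
case/and5P => _ /allP valid _ head_diag /(sortedP (0, 0)%N) wdiff_r.
set a := fun l => _.
have pos2 j : (j < size p)%N -> (0 < (nth (0, 0)%N p j).2)%N.
  by move=> ltj; have /valid/andP[] := mem_nth (0, 0)%N ltj.
have nth_p j : (j < size p)%N -> nth (0, 0)%N p j = (chain_val a j, (a j).+1).
  elim: j => [|j IH] ltj.
    move: head_diag (pos2 0%N ltj); rewrite /chain_val /partial_sum big_ord0 /a -nth0.
    by case: (nth _ p 0) => x y /= /eqP -> ?; congr pair; lia.
  move: (IH (ltnW ltj)) (wdiff_r j ltj) (pos2 j (ltnW ltj)) (pos2 _ ltj).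
  rewrite chain_val_succ /a; case: (nth _ p j) => x y; case: (nth _ p j.+1) => x' y'.
  by rewrite /wdiff /= => -[-> _] /eqP ? ? ?; congr pair; lia.
apply: (@eq_from_nth _ (0, 0)%N); first by rewrite size_mkseq.
by move=> j ltj; rewrite nth_mkseq // nth_p.
Qed.

Lemma sum_partial_sums (a : nat -> nat) (m : nat) :
  \sum_(j < m) (2 * partial_sum a j + a j) = \sum_(j < m) aweight m j * a j.
Proof.
elim: m => [|m IH]; first by rewrite !big_ord0.
rewrite big_ord_recr IH [RHS]big_ord_recr /=.
rewrite [X in _ = X + _](eq_bigr (fun j : 'I_m => aweight m j * a j + 2 * a j)%N);
  last by move=> j _; rewrite /aweight /=; have := ltn_ord j; nia.
by rewrite [in RHS]big_split -big_distrr /partial_sum /aweight /=; lia.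
Qed.

Lemma weight_chain_val (a : nat -> nat) (m : nat) :
  weight (chain a m) = \sum_(j < m) chain_val a j.
Proof. by rewrite /weight big_map -{1}(subn0 m) big_mkord. Qed.

Lemma weight_chain (a : nat -> nat) (m : nat) :
  weight (chain a m) = (\sum_(j < m) aweight m j * a j + base_weight m s)%N.
Proof.
rewrite weight_chain_val -sum_partial_sums /base_weight.
rewrite (eq_bigr (fun j : 'I_m => (2 * partial_sum a j + a j) + (1 + j * s.+1))%N);
  last by move=> j _; rewrite /chain_val; lia.
rewrite big_split [X in _ + X = _]big_split /= -big_distrl sum1_card card_ord.
by rewrite -(big_mkord xpredT (fun i => i)) -bin2_sum [in RHS]mulnC.
Qed.

End Chains.

(* Counting: for n <= K the counted partitions of weight n correspond to the
   functions f : 'I_m -> 'I_K.+1 with sum_j aweight m j * f j + base_weight = n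
   (entries of such f are automatically <= n <= K). *)
Section Counting.
Variables (s M n K : nat).
Hypothesis lenK : (n <= K)%N.

(* The sequence of values of f (f is read through inord, so only j <= M matters). *)
Definition seq_of (f : {ffun 'I_M.+1 -> 'I_K.+1}) (j : nat) : nat := f (inord j).

Definition good_ffun : {set {ffun 'I_M.+1 -> 'I_K.+1}} :=
  [set f : {ffun 'I_M.+1 -> 'I_K.+1} |
     (\sum_(j : 'I_M.+1) aweight M.+1 j * f j + base_weight M.+1 s == n)%N].

Lemma good_ffunE (f : {ffun 'I_M.+1 -> 'I_K.+1}) :
  (f \in good_ffun) = (weight (chain s (seq_of f) M.+1) == n).
Proof.
rewrite inE weight_chain; congr (_ + _ == _)%N.
by apply: eq_bigr => j _; rewrite /seq_of inord_val.
Qed.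

Definition chain_tuple (f : {ffun 'I_M.+1 -> 'I_K.+1}) : M.+1.-tuple ('I_n.+1 * 'I_n.+1) :=
  [tuple (inord (chain_val s (seq_of f) j), inord (seq_of f j).+1) | j < M.+1].

Lemma chain_tupleE (f : {ffun 'I_M.+1 -> 'I_K.+1}) : f \in good_ffun ->
  tuple_parts (chain_tuple f) = chain s (seq_of f) M.+1.
Proof.
rewrite good_ffunE => /eqP wt_n.
have le_n i : (i < M.+1)%N -> (chain_val s (seq_of f) i <= n)%N.
  by move=> lti; rewrite -wt_n weight_chain_val (bigD1 (Ordinal lti)) ?leq_addr.
apply: (@eq_from_nth _ (0, 0)%N); first by rewrite size_map size_tuple size_mkseq.
move=> i; rewrite size_map size_tuple => lti.
rewrite (nth_map (ord0, ord0)) ?size_tuple // nth_mkseq // (_ : i = Ordinal lti) //.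
rewrite nth_mktuple /=; have := le_n i lti; rewrite /chain_val => ?.
by rewrite !inordK //; lia.
Qed.

Lemma tuple_parts_inj : injective (@tuple_parts n M.+1).
Proof.
move=> t1 t2 eq_t; apply: val_inj; apply: (inj_map _ eq_t).
by case=> [x1 y1] [x2 y2] [/val_inj -> /val_inj ->].
Qed.

(* A good function is recovered from the second entries of its chain. *)
Lemma chain_tuple_inj : {in good_ffun &, injective chain_tuple}.
Proof.
move=> f1 f2 good1 good2 /(congr1 (@tuple_parts n M.+1)).
rewrite !chain_tupleE // => eq_chain; apply/ffunP => k; apply: val_inj.
have := congr1 (fun q => (nth (0, 0)%N q k).2) eq_chain.
by rewrite /= !nth_mkseq //= /seq_of inord_val => -[].
Qed.

Lemma chain_tuple_onto (t : M.+1.-tuple ('I_n.+1 * 'I_n.+1)) :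
  beta_part (s%:Z - 1) M.+1 (tuple_parts t) -> weight (tuple_parts t) = n ->
  exists2 f, f \in good_ffun & t = chain_tuple f.
Proof.
move=> beta_t wt_t.
have size_t : size (tuple_parts t) = M.+1 by rewrite size_map size_tuple.
have : beta_part (s%:Z - 1) (size (tuple_parts t)) (tuple_parts t) by rewrite size_t.
move/beta_chain; rewrite size_t; set a := fun l => _ => eq_t.
have lt_aK k : (a k < K.+1)%N.
  suff : ((nth (0, 0)%N (tuple_parts t) k).2 <= n)%N by rewrite /a; lia.
  case: (ltnP k (size (tuple_parts t))) => ltk; last by rewrite nth_default.
  rewrite (nth_map (ord0, ord0)) /=; last by rewrite size_map in ltk.
  by rewrite -ltnS ltn_ord.
pose f := [ffun k : 'I_M.+1 => (inord (a k) : 'I_K.+1)].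
have seq_of_f l : (l < M.+1)%N -> seq_of f l = a l.
  by move=> ltl; rewrite /seq_of ffunE !inordK.
have chain_f : chain s (seq_of f) M.+1 = tuple_parts t.
  rewrite eq_t /chain /mkseq; apply/eq_in_map => j; rewrite mem_iota => /andP[_ ltj].
  by rewrite (eq_chain_val _ seq_of_f ltj) seq_of_f.
have good_f : f \in good_ffun by rewrite good_ffunE chain_f wt_t.
by exists f => //; apply: tuple_parts_inj; rewrite chain_tupleE.
Qed.

Lemma beta_coef_count : beta_coef (s%:Z - 1) M.+1 n = #|good_ffun|.
Proof.
rewrite /beta_coef -(card_in_imset chain_tuple_inj).
apply: eq_card => t; rewrite inE; apply/andP/imsetP.
  by case=> beta_t /eqP wt_t; apply: chain_tuple_onto.
by case=> f good ->; rewrite chain_tupleE // chain_beta -good_ffunE.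
Qed.

End Counting.

Local Open Scope ring_scope.

Section TruncatedProduct.
Variables (R : comNzRingType) (m K : nat) (w : 'I_m -> nat).

Definition trunc_gf : {poly R} :=
  \sum_(f : {ffun 'I_m -> 'I_K}) 'X^(\sum_(j : 'I_m) w j * f j).

Lemma coef_trunc_gf (n : nat) :
  trunc_gf`_n = #|[set f : {ffun 'I_m -> 'I_K} | (\sum_(j : 'I_m) w j * f j == n)%N]|%:R.
Proof.
rewrite /trunc_gf coef_sum -sum1_card natr_sum [RHS]big_mkcond /=.
by apply: eq_bigr => f _; rewrite coefXn inE eq_sym; case: eqP.
Qed.

Lemma trunc_gf_prod : trunc_gf = \prod_(j < m) \sum_(c < K) 'X^(w j * c).
Proof. by rewrite bigA_distr_bigA /trunc_gf; apply: eq_bigr => f _; rewrite prodrXr. Qed.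

(* Multiplying by prod_j (1 - q^(w j)) telescopes every geometric series. *)
Lemma trunc_gf_telescope :
  (\prod_(j < m) (1 - 'X^(w j))) * trunc_gf = \prod_(j < m) (1 - 'X^(w j * K)).
Proof.
rewrite trunc_gf_prod -big_split; apply: eq_bigr => j _ /=.
under eq_bigr => c _ do rewrite exprM.
by rewrite -opprB mulNr -subrX1 opprB -exprM.
Qed.

End TruncatedProduct.

Lemma coef_prod_one_sub (R : comNzRingType) (I : Type) (r : seq I) (e : I -> nat)
    (K n : nat) :
  (forall i, 0 < e i)%N -> (n < K)%N ->
  (\prod_(i <- r) (1 - 'X^(e i * K)) : {poly R})`_n = (n == 0%N)%:R.
Proof.
move=> e_gt0 ltnK.
have [t ->] : exists t : {poly R}, \prod_(i <- r) (1 - 'X^(e i * K)) = 1 + 'X^K * t.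
  apply: (big_ind (fun p : {poly R} => exists t, p = 1 + 'X^K * t)).
  - by exists 0; rewrite mulr0 addr0.
  - by move=> _ _ [a ->] [b ->]; exists (a + b + 'X^K * a * b); ring.
  - move=> i _; exists (- 'X^((e i).-1 * K)).
    by rewrite -{1}(prednK (e_gt0 i)) mulSn exprD; ring.
by rewrite coefD coef1 coefXnM ltnK addr0.
Qed.

(* (q;q^2)_m with its factors listed in the order of the chain entries a_j. *)
Lemma qq2_pochE (m : nat) :
  qq2_poch m = \prod_(j < m) (1 - 'X^(aweight m j)).
Proof.
rewrite /qq2_poch (reindex_inj rev_ord_inj) /=; apply: eq_bigr => j _.
by rewrite /aweight; congr (1 - 'X^_); have := ltn_ord j; lia.
Qed.

Lemma beta_coef_gf (s M K n : nat) : (n <= K)%N ->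
  (beta_coef (s%:Z - 1) M.+1 n)%:Z =
  ('X^(base_weight M.+1 s) * trunc_gf int K.+1 (fun j : 'I_M.+1 => aweight M.+1 j))`_n.
Proof.
move=> lenK; rewrite (beta_coef_count s M lenK) coefXnM coef_trunc_gf natz.
case: ltnP => [ltn_base|le_base]; congr Posz.
  by apply: eq_card0 => f; rewrite !inE; apply/negbTE/eqP; lia.
by apply: eq_card => f; rewrite !inE; apply/eqP/eqP; lia.
Qed.

Theorem theorem20 (r : int) (m : nat) :
  (-1 <= r)%R -> (1 <= m)%N ->
  forall N : nat,
    (\sum_(k < N.+1) (qq2_poch m)`_k * (beta_coef r m (N - k))%:Z)%R =
    (if N%:Z == ((m ^ 2)%:Z + r * ('C(m, 2))%:Z)%R then 1 else 0)%R.
Proof.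
move=> r_ge m_ge1 N.
have [s ->] : exists s : nat, r = s%:Z - 1 by exists (absz (r + 1)); lia.
case: m m_ge1 => [//|M] _; rewrite sq_base_weight eqz_nat.
set E := base_weight M.+1 s; set G := trunc_gf int N.+1 (fun j : 'I_M.+1 => aweight M.+1 j).
transitivity ((qq2_poch M.+1 * ('X^E * G))`_N).
  by rewrite coefM; apply: eq_bigr => k _; rewrite (@beta_coef_gf s M N) ?leq_subr.
rewrite mulrCA coefXnM qq2_pochE trunc_gf_telescope.
case: ltnP => [ltNE|leEN]; first by case: eqP => //; lia.
rewrite coef_prod_one_sub // ?subn_eq0; last by lia.
by rewrite eqn_leq leEN andbT; case: leqP.
Qed.
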